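(* Let $J$ be an ordinal, anonymous and neutral randomized mechanism for the unit-range normalization with $n$ agents and $n$ items, and let $\epsilon>0$. Then $$ar(J) = \inf_{\mathbf u\in C_\epsilon^n} \frac{\mathbb E[\sum_{i=1}^n u_i(J(\mathbf u)_i)]}{w^*(\mathbf u)}.$$
   Context: Agents $N=\{1,\dots,n\}$, items $M=\{1,\dots,n\}$, outcomes are bijections $\mu$ ($O$ the set of outcomes). Unit-range valuation functions: injective $u:M\to\mathbb R$ with $\max_j u(j)=1$ and $\min_j u(j)=0$; $V$ is the set of these, $V^n$ the set of profiles. A randomized mechanism $J$ maps each profile to a distribution over $O$. $J$ is ordinal if its output distribution is unchanged when one agent's valuation function is replaced by another inducing the same ordering of items. $J$ is anonymous if for every permutation $\pi$ of agents, with $\mathbf u^\pi=(u_{\pi(1)},\dots,u_{\pi(n)})$, $(J(\mathbf u^\pi)_k)_k$ has the same distribution as $(J(\mathbf u)_{\pi(k)})_k$. $J$ is neutral if for every permutation $\sigma$ of items, with $\mathbf u\circ\sigma=(u_1\circ\sigma,\dots,u_n\circ\sigma)$, $(\sigma(J(\mathbf u\circ\sigma)_i))_i$ has the same distribution as $(J(\mathbf u)_i)_i$. $w^*(\mathbf u)=\max_{\mu\in O}\sum_i u_i(\mu_i)$, and $ar(J)=\inf_{\mathbf u\in V^n}\mathbb E[\sum_i u_i(J(\mathbf u)_i)]/w^*(\mathbf u)$. The quasi-combinatorial valuation functions are $C_\epsilon=\{u\in V : u(M)\subseteq[0,\epsilon)\cup(1-\epsilon,1]\}$, and $C_\epsilon^n$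 is the set of profiles all of whose valuation functions lie in $C_\epsilon$. *)

From Stdlib Require Import Reals.
From mathcomp Require Import all_boot.
From mathcomp Require Import fingroup perm.

Set Implicit Arguments.
Unset Strict Implicit.
Unset Printing Implicit Defensive.

Local Open Scope R_scope.

(* Agents and items are both 'I_n.  An outcome is a bijection agents -> items. *)
Notation outcome n := {perm 'I_n}.

Definition valuation (n : nat) := 'I_n -> R.
Definition profile (n : nat) := 'I_n -> valuation n.

Definition unit_range (n : nat) (u : valuation n) : Prop :=
  injective u /\
  (exists j, u j = 1) /\ (forall j, u j <= 1) /\
  (exists j, u j = 0) /\ (forall j, 0 <= u j).

Definition in_Vn (n : nat) (p : profile n) : Prop :=
  forall i, unit_range (p i).

Definition quasi_comb (n : nat) (eps : R) (u : valuation n) : Prop :=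
  unit_range u /\ forall j, (0 <= u j < eps) \/ (1 - eps < u j <= 1).

Definition in_Cn (n : nat) (eps : R) (p : profile n) : Prop :=
  forall i, quasi_comb eps (p i).

(* A randomized mechanism: maps a profile to a function giving the
   probability of each outcome. *)
Definition mechanism (n : nat) := profile n -> outcome n -> R.

Definition is_distribution (n : nat) (d : outcome n -> R) : Prop :=
  (forall mu, 0 <= d mu) /\ \big[Rplus/0]_(mu : outcome n) d mu = 1.

Definition randomized_mechanism (n : nat) (J : mechanism n) : Prop :=
  forall p, in_Vn p -> is_distribution (J p).

Definition replace_agent (n : nat) (p : profile n) (i : 'I_n) (v : valuation n)
  : profile n := fun k => if k == i then v else p k.

Definition same_ordering (n : nat) (u v : valuation n) : Prop :=
  forall j k, u j < u k <-> v j < v k.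

Definition ordinal_mech (n : nat) (J : mechanism n) : Prop :=
  forall p i v, in_Vn p -> unit_range v -> same_ordering (p i) v ->
    J (replace_agent p i v) = J p.

(* Anonymity: (J(u^pi)_k)_k ~ (J(u)_{pi k})_k, i.e. the probability of nu under
   J(u^pi) equals the probability under J(u) of the mu with mu (pi k) = nu k. *)
Definition anonymous_mech (n : nat) (J : mechanism n) : Prop :=
  forall p (pi : {perm 'I_n}) (nu mu : outcome n), in_Vn p ->
    (forall k, mu (pi k) = nu k) ->
    J (fun k => p (pi k)) nu = J p mu.

(* Neutrality: (sigma(J(u o sigma)_i))_i ~ (J(u)_i)_i. *)
Definition neutral_mech (n : nat) (J : mechanism n) : Prop :=
  forall p (sigma : {perm 'I_n}) (nu mu : outcome n), in_Vn p ->
    (forall i, mu i = sigma (nu i)) ->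
    J (fun i j => p i (sigma j)) nu = J p mu.

Definition welfare (n : nat) (p : profile n) (mu : outcome n) : R :=
  \big[Rplus/0]_(i < n) p i (mu i).

Definition exp_welfare (n : nat) (J : mechanism n) (p : profile n) : R :=
  \big[Rplus/0]_(mu : outcome n) (J p mu * welfare p mu).

(* Optimal welfare w*(u); on V^n all welfares are >= 0, so 0 is a neutral
   starting value for the maximum. *)
Definition opt_welfare (n : nat) (p : profile n) : R :=
  \big[Rmax/0]_(mu : outcome n) welfare p mu.

Definition ratio (n : nat) (J : mechanism n) (p : profile n) : R :=
  exp_welfare J p / opt_welfare p.

Definition is_inf (S : R -> Prop) (m : R) : Prop :=
  (forall x, S x -> m <= x) /\ (forall b, (forall x, S x -> b <= x) -> b <= m).

Definition is_ar (n : nat) (J : mechanism n) (m : R) : Prop :=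
  is_inf (fun r => exists p, in_Vn p /\ r = ratio J p) m.

(* Fix the other agents and let agent i's valuation vary
   within its ordering class: the mechanism's distribution is then constant, so the
   expected welfare is linear and the optimal welfare convex in u_i, and the ratio is
   quasi-concave: on a convex combination it is at least the smaller of the ratios at
   the two ends.  Write u_i = (1 - d) phi + d u_i with phi = u_i and d < eps.  If phi
   takes a value c strictly between 0 and 1, thresholding at c writes phi as
   c phi1 + (1 - c) phi2 where phi1, phi2 take fewer such values; descending to the
   worse end and iterating ends with a {0,1}-valued phi, for which (1 - d) phi + d u_i
   is quasi-combinatorial.  Doing this agent by agent gives a profile in C_eps^n whose
   ratio is at most that of the original one. *)
From HB Require Import structures.
From Stdlib Require Import Reals.
From mathcomp Require Import all_boot.
From mathcomp Require Import fingroup perm.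
From Stdlib Require Import Lra Classical FunctionalExtensionality.

Local Open Scope R_scope.

HB.instance Definition _ := Monoid.isComLaw.Build R 0 Rplus
  (fun x y z => esym (Rplus_assoc x y z)) Rplus_comm Rplus_0_l.

Section BigReal.
Context {T : finType}.
Implicit Types F G : T -> R.

Lemma big_Rplus_ge0 F : (forall x, 0 <= F x) -> 0 <= \big[Rplus/0]_(x : T) F x.
Proof. by move=> F0; apply: big_ind => //; [lra | move=> a b; lra]. Qed.

Lemma big_Rplus_ge_term F x0 : (forall x, 0 <= F x) ->
  F x0 <= \big[Rplus/0]_(x : T) F x.
Proof.
move=> F0; rewrite (bigD1 x0) //=.
have : 0 <= \big[Rplus/0]_(x | x != x0) F x by apply: big_ind => //; [lra | move=> a b; lra].
lra.
Qed.

Lemma big_Rplus_comb F G (c d : R) :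
  \big[Rplus/0]_(x : T) (c * F x + d * G x) =
  c * \big[Rplus/0]_(x : T) F x + d * \big[Rplus/0]_(x : T) G x.
Proof.
apply: (big_ind3 (fun a b z => z = c * a + d * b)) => //; first ring.
by move=> x1 x2 x3 y1 y2 y3 -> ->; ring.
Qed.

Lemma big_Rmax_ge_term F x0 : F x0 <= \big[Rmax/0]_(x : T) F x.
Proof.
elim: (index_enum T) (mem_index_enum x0) => [//|y s IH].
rewrite in_cons big_cons => /orP [/eqP <- | /IH le]; first exact: Rmax_l.
exact: Rle_trans le (Rmax_r _ _).
Qed.

Lemma big_Rmax_le F B : 0 <= B -> (forall x, F x <= B) ->
  \big[Rmax/0]_(x : T) F x <= B.
Proof. by move=> B0 FB; apply: (big_ind (fun z => z <= B)) => // a b; apply: Rmax_lub. Qed.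

End BigReal.

Lemma Rdiv_le_convex_comb (L1 L2 W1 W2 L W c : R) :
  0 <= L1 -> 0 <= L2 -> 0 < W1 -> 0 < W2 -> 0 < W -> 0 <= c <= 1 ->
  L = c * L1 + (1 - c) * L2 -> W <= c * W1 + (1 - c) * W2 ->
  L1 / W1 <= L / W \/ L2 / W2 <= L / W.
Proof.
move=> L1p L2p W1p W2p Wp c01 -> HW.
have below_both r : 0 <= r -> r <= L1 / W1 -> r <= L2 / W2 -> r <= (c * L1 + (1 - c) * L2) / W.
  move=> r0 r1 r2.
  have rW1 : r * W1 <= L1.
    apply: (Rmult_le_reg_r (/ W1)); first exact: Rinv_0_lt_compat.
    by rewrite Rmult_assoc Rinv_r ?Rmult_1_r; lra.
  have rW2 : r * W2 <= L2.
    apply: (Rmult_le_reg_r (/ W2)); first exact: Rinv_0_lt_compat.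
    by rewrite Rmult_assoc Rinv_r ?Rmult_1_r; lra.
  apply: (Rmult_le_reg_r W) => //.
  rewrite /Rdiv Rmult_assoc Rinv_l ?Rmult_1_r; nra.
have [r1 r2] : 0 <= L1 / W1 /\ 0 <= L2 / W2 by split; apply: Rle_mult_inv_pos.
case: (Rle_lt_dec (L1 / W1) (L2 / W2)) => cmp; [left | right]; apply: below_both; lra.
Qed.

Lemma is_inf_dominated (S T : R -> Prop) (m : R) :
  (forall x, S x -> T x) -> (forall x, T x -> exists2 y, S y & y <= x) ->
  is_inf T m <-> is_inf S m.
Proof.
move=> ST TS; split=> [[lbT glbT] | [lbS glbS]]; split.
- by move=> x /ST; apply: lbT.
- move=> b lbS; apply: glbT => x /TS [y Sy yx]; exact: Rle_trans (lbS _ Sy) yx.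
- by move=> x /TS [y Sy yx]; exact: Rle_trans (lbS _ Sy) yx.
- by move=> b lbT; apply: glbS => x /ST; apply: lbT.
Qed.

Section Valuations.
Variable n : nat.
Implicit Types (u v phi : valuation n) (p : profile n).

Lemma in_Cn_Vn eps p : in_Cn eps p -> in_Vn p.
Proof. by move=> Cp i; case: (Cp i). Qed.

Lemma replace_agent_Vn p i v : in_Vn p -> unit_range v -> in_Vn (replace_agent p i v).
Proof. by move=> Vp Uv k; rewrite /replace_agent; case: (k == i). Qed.

Lemma welfare_ge0 p mu : in_Vn p -> 0 <= welfare p mu.
Proof. by move=> Vp; apply: big_Rplus_ge0 => k; case: (Vp k) => _ [_ [_ [_]]]. Qed.

Lemma welfare_le_opt p mu : welfare p mu <= opt_welfare p.
Proof. exact: (big_Rmax_ge_term (fun mu => welfare p mu)). Qed.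

(* Some agent [i] exists, and the transposition sending [i] to its favourite item
   already has positive welfare. *)
Lemma opt_welfare_gt0 p (i : 'I_n) : in_Vn p -> 0 < opt_welfare p.
Proof.
move=> Vp; case: (Vp i) => _ [[j pij] _].
have : p i (tperm i j i) <= welfare p (tperm i j).
  by apply: (big_Rplus_ge_term (fun k => p k (tperm i j k))) => k; case: (Vp k) => _ [_ [_ [_]]].
rewrite tpermL pij => H; have := welfare_le_opt p (tperm i j); lra.
Qed.

Definition blend u phi (d : R) : valuation n := fun j => (1 - d) * phi j + d * u j.

Definition shaped_by u phi : Prop :=
  (forall j, 0 <= phi j <= 1) /\
  (forall j k, u j < u k -> phi j <= phi k) /\
  (forall j, u j = 1 -> phi j = 1) /\
  (forall j, u j = 0 -> phi j = 0).

Lemma shaped_by_self u : unit_range u -> shaped_by u u.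
Proof.
case=> _ [_ [u_le1 [_ u_ge0]]].
by split; [move=> j; split | split; [move=> j k; lra | split]].
Qed.

Lemma blend_self u d : blend u u d = u.
Proof. by apply: functional_extensionality => j; rewrite /blend; ring. Qed.

Section Blend.
Variables (u phi : valuation n) (d : R).
Hypotheses (Uu : unit_range u) (d01 : 0 < d < 1) (Sphi : shaped_by u phi).

Lemma blend_lt j k : u j < u k -> blend u phi d j < blend u phi d k.
Proof. by case: Sphi => _ [mono _] ujk; have := mono _ _ ujk; rewrite /blend; nra. Qed.

Lemma blend_same_ordering : same_ordering u (blend u phi d).
Proof.
move=> j k; split; first exact: blend_lt.
case: (total_order_T (u j) (u k)) => [[ujk | ujk] | ujk] // bjk.
- by case: Uu => inj _; rewrite (inj _ _ ujk) in bjk; lra.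
- by have := @blend_lt _ _ ujk; lra.
Qed.

Lemma blend_unit_range : unit_range (blend u phi d).
Proof.
case: Uu => inj [[t ut] [u_le1 [[b ub] u_ge0]]].
case: Sphi => phi01 [_ [phi_top phi_bot]].
split.
  move=> j k bjk; case: (total_order_T (u j) (u k)) => [[ujk | ujk] | ujk].
  - by have := @blend_lt _ _ ujk; lra.
  - exact: inj.
  - by have := @blend_lt _ _ ujk; lra.
split; first by exists t; rewrite /blend ut (phi_top _ ut); ring.
split; first by move=> j; rewrite /blend; have := phi01 j; have := u_le1 j; nra.
split; first by exists b; rewrite /blend ub (phi_bot _ ub); ring.
by move=> j; rewrite /blend; have := phi01 j; have := u_ge0 j; nra.
Qed.

Lemma blend_quasi_comb eps : d < eps -> (forall j, ~ 0 < phi j < 1) ->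
  quasi_comb eps (blend u phi d).
Proof.
move=> d_eps no_frac; split; first exact: blend_unit_range.
case: Uu => _ [_ [u_le1 [_ u_ge0]]]; case: Sphi => phi01 _.
move=> j; have := u_le1 j; have := u_ge0 j; rewrite /blend.
have [phi0 | phi1] : phi j = 0 \/ phi j = 1.
  by have := phi01 j; have := no_frac j; case: (Req_dec (phi j) 0) => ?; [left | right; lra].
- by rewrite phi0; left; nra.
- by rewrite phi1; right; nra.
Qed.

End Blend.

Definition phi_below phi (c : R) : valuation n :=
  fun j => if Rle_dec (phi j) c then phi j / c else 1.
Definition phi_above phi (c : R) : valuation n :=
  fun j => if Rle_dec (phi j) c then 0 else (phi j - c) / (1 - c).

Section ThresholdSplit.
Context {phi : valuation n} {c : R}.
Hypothesis c01 : 0 < c < 1.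

Let c_inv : c * / c = 1.
Proof. by field; lra. Qed.
Let c'_inv : (1 - c) * / (1 - c) = 1.
Proof. by field; lra. Qed.

Lemma phi_threshold_split j : phi j = c * phi_below phi c j + (1 - c) * phi_above phi c j.
Proof. by rewrite /phi_below /phi_above /Rdiv; case: Rle_dec => /=; nra. Qed.

Lemma shaped_by_below u : shaped_by u phi -> shaped_by u (phi_below phi c).
Proof.
case=> phi01 [mono [top bot]]; rewrite /phi_below /Rdiv.
split; [| split; [| split]].
- by move=> j; case: Rle_dec => /=; have := phi01 j; nra.
- move=> j k ujk; have := mono _ _ ujk; have := phi01 j; have := phi01 k.
  by case: Rle_dec => /=; case: Rle_dec => /=; nra.
- by move=> j /top ->; case: Rle_dec => //=; lra.
- by move=> j /bot ->; case: Rle_dec => /=; lra.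
Qed.

Lemma shaped_by_above u : shaped_by u phi -> shaped_by u (phi_above phi c).
Proof.
case=> phi01 [mono [top bot]]; rewrite /phi_above /Rdiv.
split; [| split; [| split]].
- by move=> j; case: Rle_dec => /=; have := phi01 j; nra.
- move=> j k ujk; have := mono _ _ ujk; have := phi01 j; have := phi01 k.
  by case: Rle_dec => /=; case: Rle_dec => /=; nra.
- by move=> j /top ->; case: Rle_dec => /=; nra.
- by move=> j /bot ->; case: Rle_dec => /=; lra.
Qed.

Lemma frac_below j : 0 < phi_below phi c j < 1 -> 0 < phi j < 1 /\ phi j <> c.
Proof. by rewrite /phi_below /Rdiv; case: Rle_dec => /=; nra. Qed.

Lemma frac_above j : phi j <= 1 -> 0 < phi_above phi c j < 1 -> 0 < phi j < 1 /\ phi j <> c.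
Proof. by rewrite /phi_above /Rdiv; case: Rle_dec => /=; nra. Qed.

End ThresholdSplit.

Section Mechanism.
Variable J : mechanism n.
Hypotheses (HJ : randomized_mechanism J) (Hord : ordinal_mech J).

Lemma exp_welfare_ge0 p : in_Vn p -> 0 <= exp_welfare J p.
Proof.
move=> Vp; apply: big_Rplus_ge0 => mu.
by apply: Rmult_le_pos; [case: (HJ _ Vp) | exact: welfare_ge0].
Qed.

Lemma ratio_replace_quasi_concave p i x x1 x2 c : in_Vn p ->
  unit_range x -> unit_range x1 -> unit_range x2 ->
  same_ordering (p i) x -> same_ordering (p i) x1 -> same_ordering (p i) x2 ->
  (forall j, x j = c * x1 j + (1 - c) * x2 j) -> 0 <= c <= 1 ->
  ratio J (replace_agent p i x1) <= ratio J (replace_agent p i x) \/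
  ratio J (replace_agent p i x2) <= ratio J (replace_agent p i x).
Proof.
move=> Vp Ux U1 U2 Ox O1 O2 x_comb c01.
set q := replace_agent p i x; set q1 := replace_agent p i x1; set q2 := replace_agent p i x2.
have [Vq Vq1 Vq2] : [/\ in_Vn q, in_Vn q1 & in_Vn q2] by split; apply: replace_agent_Vn.
have w_comb mu : welfare q mu = c * welfare q1 mu + (1 - c) * welfare q2 mu.
  rewrite /welfare -big_Rplus_comb; apply: eq_bigr => k _.
  by rewrite /q /q1 /q2 /replace_agent; case: (k == i); [apply: x_comb | ring].
apply: (@Rdiv_le_convex_comb _ _ _ _ _ _ c) => //;
  try exact: exp_welfare_ge0; try exact: opt_welfare_gt0.
- rewrite /exp_welfare (Hord _ _ _ Vp Ux Ox) (Hord _ _ _ Vp U1 O1) (Hord _ _ _ Vp U2 O2).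
  by rewrite -big_Rplus_comb; apply: eq_bigr => mu _; rewrite w_comb; ring.
- apply: big_Rmax_le => [|mu].
    by have := opt_welfare_gt0 _ i Vq1; have := opt_welfare_gt0 _ i Vq2; nra.
  by rewrite w_comb; have := welfare_le_opt q1 mu; have := welfare_le_opt q2 mu; nra.
Qed.

Lemma replace_blend_quasi_comb p i d eps : in_Vn p -> 0 < d < 1 -> d < eps ->
  forall N (M : {set 'I_n}) phi, (#|M| <= N)%N ->
  (forall j, 0 < phi j < 1 -> j \in M) -> shaped_by (p i) phi ->
  exists2 v, quasi_comb eps v &
    ratio J (replace_agent p i v) <= ratio J (replace_agent p i (blend (p i) phi d)).
Proof.
move=> Vp d01 d_eps N; elim: N => [|N IH] M phi M_N frac_M Sphi.
all: case: (classic (exists k, 0 < phi k < 1)) => [[k phik] | no_frac]; last first.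
1,3: exists (blend (p i) phi d); last exact: Rle_refl.
1,2: by apply: blend_quasi_comb => // j phij; apply: no_frac; exists j.
  by move: M_N (frac_M k phik); rewrite leqn0 cards_eq0 => /eqP ->; rewrite inE.
have M'_N : (#|M :\ k| <= N)%N by move: M_N; rewrite (cardsD1 k M) frac_M.
have frac_M' phi' : (forall j, 0 < phi' j < 1 -> 0 < phi j < 1 /\ phi j <> phi k) ->
    forall j, 0 < phi' j < 1 -> j \in M :\ k.
  move=> frac j /frac [/frac_M jM phij]; rewrite in_setD1 jM andbT.
  by apply/eqP=> jk; apply: phij; rewrite jk.
have Sbelow := shaped_by_below phik _ Sphi; have Sabove := shaped_by_above phik _ Sphi.
have [v1 Qv1 le1] := IH _ _ M'_N (frac_M' _ (frac_below phik)) Sbelow.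
have frac_above' j := frac_above phik j (proj2 (proj1 Sphi j)).
have [v2 Qv2 le2] := IH _ (phi_above phi (phi k)) M'_N (frac_M' _ frac_above') Sabove.
have UV := @blend_unit_range (p i) _ d (Vp i) d01.
have OV := @blend_same_ordering (p i) _ d (Vp i) d01.
have blend_split j : blend (p i) phi d j = phi k * blend (p i) (phi_below phi (phi k)) d j
    + (1 - phi k) * blend (p i) (phi_above phi (phi k)) d j.
  by rewrite /blend (phi_threshold_split phik j); ring.
have phik01 : 0 <= phi k <= 1 by lra.
have [le | le] := @ratio_replace_quasi_concave _ _ _ _ _ _ Vp (UV _ Sphi) (UV _ Sbelow)
  (UV _ Sabove) (OV _ Sphi) (OV _ Sbelow) (OV _ Sabove) blend_split phik01.
- by exists v1 => //; lra.
- by exists v2 => //; lra.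
Qed.

Lemma replace_agent_quasi_comb p i eps : in_Vn p -> 0 < eps ->
  exists2 v, quasi_comb eps v & ratio J (replace_agent p i v) <= ratio J p.
Proof.
move=> Vp eps_gt0; set d := Rmin eps 1 / 2.
have d01 : 0 < d < 1 by have := Rmin_r eps 1; have := Rmin_glb_lt eps 1 0; rewrite /d; lra.
have d_eps : d < eps by have := Rmin_l eps 1; have := Rmin_glb_lt eps 1 0; rewrite /d; lra.
have [v Qv le] := replace_blend_quasi_comb _ i _ _ Vp d01 d_eps _ _ _ (leqnn #|[set: 'I_n]|)
  (fun j _ => in_setT j) (shaped_by_self _ (Vp i)).
exists v => //; move: le; rewrite blend_self.
suff -> : replace_agent p i (p i) = p by [].
by apply: functional_extensionality => k; rewrite /replace_agent; case: eqP => [-> |].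
Qed.

Lemma quasi_comb_profile_below eps p : 0 < eps -> in_Vn p ->
  exists2 q, in_Cn eps q & ratio J q <= ratio J p.
Proof.
move=> eps_gt0.
suff agents_from k q : in_Vn q -> (forall i : 'I_n, (k <= i)%N -> quasi_comb eps (q i)) ->
    exists2 r, in_Cn eps r & ratio J r <= ratio J q.
  by move=> Vp; apply: (agents_from n) => // i; rewrite leqNgt ltn_ord.
elim: k q => [|k IH] q Vq Qq; first by exists q; [move=> i; apply: Qq | exact: Rle_refl].
have [k_lt_n | n_le_k] := ltnP k n; last first.
  by apply: IH => // i; rewrite leqNgt (leq_trans (ltn_ord i) n_le_k).
pose i := Ordinal k_lt_n.
have [v Qv le_v] := replace_agent_quasi_comb q i eps Vq eps_gt0.
have Vq' : in_Vn (replace_agent q i v) by apply: replace_agent_Vn => //; case: Qv.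
have Qq' (j : 'I_n) : (k <= j)%N -> quasi_comb eps (replace_agent q i v j).
  move=> kj; rewrite /replace_agent; case: eqP => // /eqP ji; apply: Qq.
  by rewrite ltn_neqAle kj andbT eq_sym; apply: contra ji => /eqP jk; apply/eqP/val_inj.
have [r Cr le_r] := IH _ Vq' Qq'.
by exists r => //; lra.
Qed.

End Mechanism.
End Valuations.

Theorem lemma3 (n : nat) (J : mechanism n) (eps : R) :
  randomized_mechanism J -> ordinal_mech J -> anonymous_mech J ->
  neutral_mech J -> 0 < eps ->
  forall m : R,
    is_ar J m <->
    is_inf (fun r => exists p, in_Cn eps p /\ r = ratio J p) m.
Proof.
move=> HJ Hord _ _ eps_gt0 m; apply: is_inf_dominated.
- by move=> _ [p [Cp ->]]; exists p; split => //; exact: in_Cn_Vn Cp.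
- move=> _ [p [Vp ->]].
  have [q Cq le] := @quasi_comb_profile_below _ J HJ Hord eps p eps_gt0 Vp.
  by exists (ratio J q) => //; exists q.
Qed.
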